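(* For all formulas $A,B$ of bilattice logic, if $A\vdash B$ is derivable in BL, then the sequent $t_1(A)\vdash t_1(B)$ is derivable in D.BL; and for all formulas $A,B$ of bilattice logic with conflation, if $A\vdash B$ is derivable in CBL, then $t_1(A)\vdash t_1(B)$ is derivable in D.CBL.
   Context: Bilattice logic BL. Formulas over countably many atoms: $A::=p\mid \mathtt{t}\mid\mathtt{f}\mid\top\mid\bot\mid\neg A\mid A\wedge A\mid A\vee A\mid A\otimes A\mid A\oplus A$ (for CBL also $-A$). BL derives sequents $A\vdash B$ from the axioms $A\vdash A$; $\neg\neg A\vdash A$ and $A\vdash\neg\neg A$; $\mathtt{f}\vdash A$; $A\vdash\mathtt{t}$; $\bot\vdash A$; $A\vdash\top$; $A\vdash\neg\mathtt{f}$; $\neg\mathtt{t}\vdash A$; $\neg\bot\vdash A$; $A\vdash\neg\top$; $A\wedge B\vdash A$; $A\wedge B\vdash B$; $A\vdash A\vee B$; $B\vdash A\vee B$; $A\otimes B\vdash A$; $A\otimes B\vdash B$; $A\vdash A\oplus B$; $B\vdash A\oplus B$; $A\wedge(B\vee C)\vdash(A\wedge B)\vee(A\wedge C)$; $A\otimes(B\oplus C)\vdash(A\otimes B)\vee(A\oplus C)$; and both directions of $\neg(A\wedge B)\dashv\vdash\neg A\vee\neg B$, $\neg(A\vee B)\dashv\vdash\neg A\wedge\neg B$, $\neg(A\otimes B)\dashv\vdash\neg A\otimes\neg B$, $\neg(A\oplus B)\dashv\vdash\neg A\oplus\neg B$; using the rules: from $A\vdash B$ and $B\vdash C$ infer $A\vdash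 C$; from $A\vdash B$ and $A\vdash C$ infer $A\vdash B\wedge C$ and $A\vdash B\otimes C$; from $A\vdash B$ and $C\vdash B$ infer $A\vee C\vdash B$ and $A\oplus C\vdash B$. CBL is BL plus the axioms (both directions where $\dashv\vdash$) $--A\dashv\vdash A$, $-\neg A\dashv\vdash\neg-A$, $-\mathtt{f}\vdash A$, $A\vdash-\mathtt{t}$, $-\top\vdash A$, $A\vdash-\bot$, $-(A\wedge B)\dashv\vdash-A\wedge-B$, $-(A\vee B)\dashv\vdash-A\vee-B$, $-(A\otimes B)\dashv\vdash-A\oplus-B$, $-(A\oplus B)\dashv\vdash-A\otimes-B$. Translation: $t_1,t_2$ map BL/CBL formulas to type-1/type-2 formulas of D.BL/D.CBL: $t_1(p)=p_1$, $t_2(p)=p_2$; $t_1(\mathtt{t})=1_1,t_2(\mathtt{t})=0_2$; $t_1(\mathtt{f})=0_1,t_2(\mathtt{f})=1_2$; $t_1(\top)=1_1,t_2(\top)=1_2$; $t_1(\bot)=0_1,t_2(\bot)=0_2$; $t_1(A\wedge B)=t_1A\sqcap_1t_1B$, $t_2(A\wedge B)=t_2A\sqcup_2t_2B$; $t_1(A\vee B)=t_1A\sqcup_1t_1B$, $t_2(A\vee B)=t_2A\sqcap_2t_2B$; $t_1(A\otimes B)=t_1A\sqcap_1t_1B$, $t_2(A\otimes B)=t_2A\sqcap_2t_2B$; $t_1(A\oplus B)=t_1A\sqcup_1t_1B$, $t_2(A\oplus B)=t_2A\sqcup_2t_2B$; $t_1(\neg A)=\mathrm{p}\,t_2(A)$,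 $t_2(\neg A)=\mathrm{n}\,t_1(A)$; $t_1(-A)=\mathrm{p}{\sim}_2t_2(A)$, $t_2(-A)=\mathrm{n}{\sim}_1t_1(A)$. Calculus D.BL. Two types $1,2$; type-$i$ atoms $p_i,q_i,\dots$. Type-1 formulas: $A_1::=p_1\mid 1_1\mid 0_1\mid \mathrm{p}A_2\mid A_1\sqcap_1A_1\mid A_1\sqcup_1A_1$; type-2 formulas: $A_2::=p_2\mid 1_2\mid 0_2\mid \mathrm{n}A_1\mid A_2\sqcap_2A_2\mid A_2\sqcup_2A_2$. Type-1 structures: $X_1::=A_1\mid \hat1_1\mid\check0_1\mid \mathrm{P}X_2\mid X_1\hat\sqcap_1X_1\mid X_1\check\sqcup_1X_1\mid X_1\check\sqsupset_1X_1\mid X_1\hat\sqsubset_1X_1$; type-2 structures analogously with index 2 and $\mathrm{N}X_1$ instead of $\mathrm{P}X_2$. Sequents $X_i\vdash Y_i$ have both sides of the same type. Rules (for $i\in\{1,2\}$; ''$\Leftrightarrow$'' = both directions): Display: $X\hat\sqcap_iY\vdash Z\Leftrightarrow X\vdash Y\check\sqsupset_iZ$; $X\vdash Y\check\sqcup_iZ\Leftrightarrow X\hat\sqsubset_iY\vdash Z$; $\mathrm{P}X_2\vdash Y_1\Leftrightarrow X_2\vdash \mathrm{N}Y_1$; $\mathrm{N}X_1\vdash Y_2\Leftrightarrow X_1\vdash\mathrm{P}Y_2$. Identity $p_i\vdash p_i$; Cut: from $X\vdash A$ and $A\vdash Y$ infer $X\vdash Y$. Structural: from $X\hat\sqcap_i\hat1_i\vdash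 Y$ infer $X\vdash Y$; from $X\vdash Y\check\sqcup_i\check0_i$ infer $X\vdash Y$; exchange (from $X\hat\sqcap_iY\vdash Z$ infer $Y\hat\sqcap_iX\vdash Z$; from $X\vdash Y\check\sqcup_iZ$ infer $X\vdash Z\check\sqcup_iY$); associativity (from $(X\hat\sqcap_iY)\hat\sqcap_iZ\vdash W$ infer $X\hat\sqcap_i(Y\hat\sqcap_iZ)\vdash W$; from $X\vdash(Y\check\sqcup_iZ)\check\sqcup_iW$ infer $X\vdash Y\check\sqcup_i(Z\check\sqcup_iW)$); weakening (from $X\vdash Z$ infer $X\hat\sqcap_iY\vdash Z$; from $X\vdash Y$ infer $X\vdash Y\check\sqcup_iZ$); contraction (from $X\hat\sqcap_iX\vdash Z$ infer $X\vdash Z$; from $X\vdash Y\check\sqcup_iY$ infer $X\vdash Y$). Operational: from $\hat1_i\vdash X$ infer $1_i\vdash X$; axiom $\hat1_i\vdash1_i$; axiom $0_i\vdash\check0_i$; from $X\vdash\check0_i$ infer $X\vdash0_i$; from $A\hat\sqcap_iB\vdash X$ infer $A\sqcap_iB\vdash X$; from $X\vdash A$ and $Y\vdash B$ infer $X\hat\sqcap_iY\vdash A\sqcap_iB$; from $A\vdash X$ and $B\vdash Y$ infer $A\sqcup_iB\vdash X\check\sqcup_iY$; from $X\vdash A\check\sqcup_iB$ infer $X\vdash A\sqcup_iB$. Multi-type structural: $X_1\vdash Y_1\Leftrightarrow\mathrm{N}X_1\vdash\mathrm{N}Y_1$; $X_2\vdash Y_2\Leftrightarrow\mathrm{P}X_2\vdash\mathrm{P}Y_2$;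 from $\check0_1\vdash X_1$ infer $\mathrm{P}\check0_2\vdash X_1$; from $X_1\vdash\hat1_1$ infer $X_1\vdash\mathrm{P}\hat1_2$. Multi-type operational: from $\mathrm{N}A_1\vdash X_2$ infer $\mathrm{n}A_1\vdash X_2$; from $X_2\vdash\mathrm{N}A_1$ infer $X_2\vdash\mathrm{n}A_1$; from $\mathrm{P}A_2\vdash X_1$ infer $\mathrm{p}A_2\vdash X_1$; from $X_1\vdash\mathrm{P}A_2$ infer $X_1\vdash\mathrm{p}A_2$. D.CBL adds formulas ${\sim}_iA_i$, structures $\ast_iX_i$, and rules: $\ast_iX\vdash Y\Leftrightarrow\ast_iY\vdash X$; $X\vdash\ast_iY\Leftrightarrow Y\vdash\ast_iX$; $X\vdash Y\Leftrightarrow\ast_iY\vdash\ast_iX$; from $\mathrm{N}\ast_1X_1\vdash Y_2$ infer $\ast_2\mathrm{N}X_1\vdash Y_2$; from $X_2\vdash\mathrm{N}\ast_1Y_1$ infer $X_2\vdash\ast_2\mathrm{N}Y_1$; from $\ast_iA\vdash Y$ infer ${\sim}_iA\vdash Y$; from $X\vdash\ast_iA$ infer $X\vdash{\sim}_iA$. A formula is regarded as a structure. *)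

Set Implicit Arguments.

(* Source logics BL / CBL.  The flag [c] says whether conflation [-] is    *)
(* available: [bform false] = BL formulas, [bform true] = CBL formulas.    *)
Inductive bform (c : bool) : Type :=
| BAt : nat -> bform c
| Bt : bform c
| Bf : bform c
| Btop : bform c
| Bbot : bform c
| BNeg : bform c -> bform c
| BAnd : bform c -> bform c -> bform c
| BOr : bform c -> bform c -> bform c
| BOtimes : bform c -> bform c -> bform c
| BOplus : bform c -> bform c -> bform c
| BConf : c = true -> bform c -> bform c.

Arguments BAt {c}. Arguments Bt {c}. Arguments Bf {c}. Arguments Btop {c}.
Arguments Bbot {c}. Arguments BNeg {c}. Arguments BAnd {c}. Arguments BOr {c}.
Arguments BOtimes {c}. Arguments BOplus {c}. Arguments BConf {c}.

Inductive bder {c : bool} : bform c -> bform c -> Prop :=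
| b_id A : bder A A
| b_nn1 A : bder (BNeg (BNeg A)) A
| b_nn2 A : bder A (BNeg (BNeg A))
| b_f A : bder Bf A
| b_t A : bder A Bt
| b_bot A : bder Bbot A
| b_top A : bder A Btop
| b_negf A : bder A (BNeg Bf)
| b_negt A : bder (BNeg Bt) A
| b_negbot A : bder (BNeg Bbot) A
| b_negtop A : bder A (BNeg Btop)
| b_and1 A B : bder (BAnd A B) A
| b_and2 A B : bder (BAnd A B) B
| b_or1 A B : bder A (BOr A B)
| b_or2 A B : bder B (BOr A B)
| b_ot1 A B : bder (BOtimes A B) A
| b_ot2 A B : bder (BOtimes A B) B
| b_op1 A B : bder A (BOplus A B)
| b_op2 A B : bder B (BOplus A B)
| b_dist1 A B C : bder (BAnd A (BOr B C)) (BOr (BAnd A B) (BAnd A C))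
| b_dist2 A B C : bder (BOtimes A (BOplus B C)) (BOr (BOtimes A B) (BOplus A C))
| b_negand1 A B : bder (BNeg (BAnd A B)) (BOr (BNeg A) (BNeg B))
| b_negand2 A B : bder (BOr (BNeg A) (BNeg B)) (BNeg (BAnd A B))
| b_negor1 A B : bder (BNeg (BOr A B)) (BAnd (BNeg A) (BNeg B))
| b_negor2 A B : bder (BAnd (BNeg A) (BNeg B)) (BNeg (BOr A B))
| b_negot1 A B : bder (BNeg (BOtimes A B)) (BOtimes (BNeg A) (BNeg B))
| b_negot2 A B : bder (BOtimes (BNeg A) (BNeg B)) (BNeg (BOtimes A B))
| b_negop1 A B : bder (BNeg (BOplus A B)) (BOplus (BNeg A) (BNeg B))
| b_negop2 A B : bder (BOplus (BNeg A) (BNeg B)) (BNeg (BOplus A B))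
| b_cut A B C : bder A B -> bder B C -> bder A C
| b_andR A B C : bder A B -> bder A C -> bder A (BAnd B C)
| b_otR A B C : bder A B -> bder A C -> bder A (BOtimes B C)
| b_orL A B C : bder A B -> bder C B -> bder (BOr A C) B
| b_opL A B C : bder A B -> bder C B -> bder (BOplus A C) B
| c_cc1 (h : c = true) A : bder (BConf h (BConf h A)) A
| c_cc2 (h : c = true) A : bder A (BConf h (BConf h A))
| c_cn1 (h : c = true) A : bder (BConf h (BNeg A)) (BNeg (BConf h A))
| c_cn2 (h : c = true) A : bder (BNeg (BConf h A)) (BConf h (BNeg A))
| c_f (h : c = true) A : bder (BConf h Bf) A
| c_t (h : c = true) A : bder A (BConf h Bt)
| c_top (h : c = true) A : bder (BConf h Btop) A
| c_bot (h : c = true) A : bder A (BConf h Bbot)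
| c_and1 (h : c = true) A B : bder (BConf h (BAnd A B)) (BAnd (BConf h A) (BConf h B))
| c_and2 (h : c = true) A B : bder (BAnd (BConf h A) (BConf h B)) (BConf h (BAnd A B))
| c_or1 (h : c = true) A B : bder (BConf h (BOr A B)) (BOr (BConf h A) (BConf h B))
| c_or2 (h : c = true) A B : bder (BOr (BConf h A) (BConf h B)) (BConf h (BOr A B))
| c_ot1 (h : c = true) A B : bder (BConf h (BOtimes A B)) (BOplus (BConf h A) (BConf h B))
| c_ot2 (h : c = true) A B : bder (BOplus (BConf h A) (BConf h B)) (BConf h (BOtimes A B))
| c_op1 (h : c = true) A B : bder (BConf h (BOplus A B)) (BOtimes (BConf h A) (BConf h B))
| c_op2 (h : c = true) A B : bder (BOtimes (BConf h A) (BConf h B)) (BConf h (BOplus A B)).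

(* Multi-type display calculi D.BL ([c = false]) and D.CBL ([c = true]).  *)
Inductive ty : Type := T1 | T2.

Inductive fm (c : bool) : ty -> Type :=
| FAt i : nat -> fm c i
| FOne i : fm c i
| FZero i : fm c i
| Fp : fm c T2 -> fm c T1
| Fn : fm c T1 -> fm c T2
| FMeet i : fm c i -> fm c i -> fm c i
| FJoin i : fm c i -> fm c i -> fm c i
| FNeg i : c = true -> fm c i -> fm c i.

Arguments FAt {c}. Arguments FOne {c}. Arguments FZero {c}. Arguments Fp {c}.
Arguments Fn {c}. Arguments FMeet {c i}. Arguments FJoin {c i}. Arguments FNeg {c i}.

Inductive st (c : bool) : ty -> Type :=
| SF i : fm c i -> st c i
| SOne i : st c i
| SZero i : st c i
| SP : st c T2 -> st c T1
| SN : st c T1 -> st c T2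
| SMeet i : st c i -> st c i -> st c i
| SJoin i : st c i -> st c i -> st c i
| SRImp i : st c i -> st c i -> st c i
| SLImp i : st c i -> st c i -> st c i
| SStar i : c = true -> st c i -> st c i.

Arguments SF {c i}. Arguments SOne {c}. Arguments SZero {c}. Arguments SP {c}.
Arguments SN {c}. Arguments SMeet {c i}. Arguments SJoin {c i}.
Arguments SRImp {c i}. Arguments SLImp {c i}. Arguments SStar {c i}.

Inductive dder {c : bool} : forall {i : ty}, st c i -> st c i -> Prop :=
| d_res1 i (X Y Z : st c i) : dder (SMeet X Y) Z -> dder X (SRImp Y Z)
| d_res2 i (X Y Z : st c i) : dder X (SRImp Y Z) -> dder (SMeet X Y) Z
| d_res3 i (X Y Z : st c i) : dder X (SJoin Y Z) -> dder (SLImp X Y) Z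
| d_res4 i (X Y Z : st c i) : dder (SLImp X Y) Z -> dder X (SJoin Y Z)
| d_PN1 (X : st c T2) (Y : st c T1) : dder (SP X) Y -> dder X (SN Y)
| d_PN2 (X : st c T2) (Y : st c T1) : dder X (SN Y) -> dder (SP X) Y
| d_NP1 (X : st c T1) (Y : st c T2) : dder (SN X) Y -> dder X (SP Y)
| d_NP2 (X : st c T1) (Y : st c T2) : dder X (SP Y) -> dder (SN X) Y
| d_id i n : dder (SF (FAt i n)) (SF (FAt i n))
| d_cut i (X Y : st c i) (A : fm c i) : dder X (SF A) -> dder (SF A) Y -> dder X Y
| d_oneE i (X Y : st c i) : dder (SMeet X (SOne i)) Y -> dder X Y
| d_zeroE i (X Y : st c i) : dder X (SJoin Y (SZero i)) -> dder X Y
| d_exL i (X Y Z : st c i) : dder (SMeet X Y) Z -> dder (SMeet Y X) Z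
| d_exR i (X Y Z : st c i) : dder X (SJoin Y Z) -> dder X (SJoin Z Y)
| d_asL i (X Y Z W : st c i) : dder (SMeet (SMeet X Y) Z) W -> dder (SMeet X (SMeet Y Z)) W
| d_asR i (X Y Z W : st c i) : dder X (SJoin (SJoin Y Z) W) -> dder X (SJoin Y (SJoin Z W))
| d_wL i (X Y Z : st c i) : dder X Z -> dder (SMeet X Y) Z
| d_wR i (X Y Z : st c i) : dder X Y -> dder X (SJoin Y Z)
| d_cL i (X Z : st c i) : dder (SMeet X X) Z -> dder X Z
| d_cR i (X Y : st c i) : dder X (SJoin Y Y) -> dder X Y
| d_oneL i (X : st c i) : dder (SOne i) X -> dder (SF (FOne i)) X
| d_oneR i : dder (SOne i) (SF (FOne i))
| d_zeroL i : dder (SF (FZero i)) (SZero i)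
| d_zeroR i (X : st c i) : dder X (SZero i) -> dder X (SF (FZero i))
| d_meetL i (A B : fm c i) (X : st c i) :
    dder (SMeet (SF A) (SF B)) X -> dder (SF (FMeet A B)) X
| d_meetR i (X Y : st c i) (A B : fm c i) :
    dder X (SF A) -> dder Y (SF B) -> dder (SMeet X Y) (SF (FMeet A B))
| d_joinL i (A B : fm c i) (X Y : st c i) :
    dder (SF A) X -> dder (SF B) Y -> dder (SF (FJoin A B)) (SJoin X Y)
| d_joinR i (X : st c i) (A B : fm c i) :
    dder X (SJoin (SF A) (SF B)) -> dder X (SF (FJoin A B))
| d_N1 (X Y : st c T1) : dder X Y -> dder (SN X) (SN Y)
| d_N2 (X Y : st c T1) : dder (SN X) (SN Y) -> dder X Y
| d_P1 (X Y : st c T2) : dder X Y -> dder (SP X) (SP Y)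
| d_P2 (X Y : st c T2) : dder (SP X) (SP Y) -> dder X Y
| d_Pzero (X : st c T1) : dder (SZero T1) X -> dder (SP (SZero T2)) X
| d_Pone (X : st c T1) : dder X (SOne T1) -> dder X (SP (SOne T2))
| d_nL (A : fm c T1) (X : st c T2) : dder (SN (SF A)) X -> dder (SF (Fn A)) X
| d_nR (X : st c T2) (A : fm c T1) : dder X (SN (SF A)) -> dder X (SF (Fn A))
| d_pL (A : fm c T2) (X : st c T1) : dder (SP (SF A)) X -> dder (SF (Fp A)) X
| d_pR (X : st c T1) (A : fm c T2) : dder X (SP (SF A)) -> dder X (SF (Fp A))
| d_st1 (h : c = true) i (X Y : st c i) : dder (SStar h X) Y -> dder (SStar h Y) X
| d_st2 (h : c = true) i (X Y : st c i) : dder X (SStar h Y) -> dder Y (SStar h X)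
| d_st3 (h : c = true) i (X Y : st c i) : dder X Y -> dder (SStar h Y) (SStar h X)
| d_st4 (h : c = true) i (X Y : st c i) : dder (SStar h Y) (SStar h X) -> dder X Y
| d_stNL (h : c = true) (X : st c T1) (Y : st c T2) :
    dder (SN (SStar h X)) Y -> dder (SStar h (SN X)) Y
| d_stNR (h : c = true) (X : st c T2) (Y : st c T1) :
    dder X (SN (SStar h Y)) -> dder X (SStar h (SN Y))
| d_negL (h : c = true) i (A : fm c i) (Y : st c i) :
    dder (SStar h (SF A)) Y -> dder (SF (FNeg h A)) Y
| d_negR (h : c = true) i (X : st c i) (A : fm c i) :
    dder X (SStar h (SF A)) -> dder X (SF (FNeg h A)).

Fixpoint t1 {c : bool} (A : bform c) : fm c T1 :=
  match A with
  | BAt n => FAt T1 n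
  | Bt => FOne T1
  | Bf => FZero T1
  | Btop => FOne T1
  | Bbot => FZero T1
  | BAnd A B => FMeet (t1 A) (t1 B)
  | BOr A B => FJoin (t1 A) (t1 B)
  | BOtimes A B => FMeet (t1 A) (t1 B)
  | BOplus A B => FJoin (t1 A) (t1 B)
  | BNeg A => Fp (t2 A)
  | BConf h A => Fp (FNeg h (t2 A))
  end
with t2 {c : bool} (A : bform c) : fm c T2 :=
  match A with
  | BAt n => FAt T2 n
  | Bt => FZero T2
  | Bf => FOne T2
  | Btop => FOne T2
  | Bbot => FZero T2
  | BAnd A B => FJoin (t2 A) (t2 B)
  | BOr A B => FMeet (t2 A) (t2 B)
  | BOtimes A B => FMeet (t2 A) (t2 B)
  | BOplus A B => FJoin (t2 A) (t2 B)
  | BNeg A => Fn (t1 A)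
  | BConf h A => Fn (FNeg h (t1 A))
  end.


(* Read [a ⊢ b] between formulas of the same type as a preorder: the identity
   axiom extends from atoms to all formulas and cut makes it transitive.
   Weakening, exchange and contraction make ⊓ and ⊔ meets and joins, and the
   residuation of ⊓ into ⊐ gives distributivity.  The display postulate
   [P X ⊢ Y <-> X ⊢ N Y] makes p and n adjoint, which gives monotonicity of
   p, [p (n a) ⊣⊢ a], and preservation of ⊓ and ⊔ by p.  In D.CBL the rules
   for * make ~ an antitone involution that commutes with n.  Under t1 every
   axiom of BL and CBL becomes one of these laws and every rule a lattice
   rule, so derivability is preserved by induction on derivations. *)

Notation "a ⊢ b" := (dder (SF a) (SF b)) (at level 70, no associativity).

Section Lattice.
Context {c : bool}.

Lemma der_refl {i} (a : fm c i) : a ⊢ a.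
Proof.
  induction a.
  - apply d_id.
  - apply d_oneL, d_oneR.
  - apply d_zeroR, d_zeroL.
  - apply d_pL, d_pR, d_P1; assumption.
  - apply d_nL, d_nR, d_N1; assumption.
  - apply d_meetL, d_meetR; assumption.
  - apply d_joinR, d_joinL; assumption.
  - apply d_negL, d_negR, d_st3; assumption.
Qed.

Lemma meet_glb {i} (X : st c i) (a b : fm c i) :
  dder X (SF a) -> dder X (SF b) -> dder X (SF (FMeet a b)).
Proof. intros Ha Hb. apply d_cL, d_meetR; assumption. Qed.

Lemma meet_lb_l {i} (a b : fm c i) : FMeet a b ⊢ a.
Proof. apply d_meetL, d_wL, der_refl. Qed.

Lemma meet_lb_r {i} (a b : fm c i) : FMeet a b ⊢ b.
Proof. apply d_meetL, d_exL, d_wL, der_refl. Qed.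

Lemma join_lub {i} (Y : st c i) (a b : fm c i) :
  dder (SF a) Y -> dder (SF b) Y -> dder (SF (FJoin a b)) Y.
Proof. intros Ha Hb. apply d_cR, d_joinL; assumption. Qed.

Lemma join_ub_l {i} (a b : fm c i) : a ⊢ FJoin a b.
Proof. apply d_joinR, d_wR, der_refl. Qed.

Lemma join_ub_r {i} (a b : fm c i) : b ⊢ FJoin a b.
Proof. apply d_joinR, d_exR, d_wR, der_refl. Qed.

Lemma le_one {i} (X : st c i) : dder X (SF (FOne i)).
Proof. apply d_oneE, d_exL, d_wL, d_oneR. Qed.

Lemma zero_le {i} (Y : st c i) : dder (SF (FZero i)) Y.
Proof. apply d_zeroE, d_exR, d_wR, d_zeroL. Qed.

Lemma meet_join_distr {i} (a b d : fm c i) :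
  FMeet a (FJoin b d) ⊢ FJoin (FMeet a b) (FMeet a d).
Proof.
  (* display [a] to the right as [a ⊐ _], split the join, and display it back *)
  apply d_joinR, d_meetL, d_exL, d_res2, d_cR, d_joinL; apply d_res1, d_exL.
  - apply d_wR, d_meetR; apply der_refl.
  - apply d_exR, d_wR, d_meetR; apply der_refl.
Qed.

End Lattice.

Section Adjunction.
Context {c : bool}.

Lemma p_mono {a b : fm c T2} : a ⊢ b -> Fp a ⊢ Fp b.
Proof. intro Hab. apply d_pL, d_pR, d_P1; assumption. Qed.

Lemma P_le_p (a : fm c T2) : dder (SP (SF a)) (SF (Fp a)).
Proof. apply d_pR, d_P1, der_refl. Qed.

Lemma p_le_P (a : fm c T2) : dder (SF (Fp a)) (SP (SF a)).
Proof. apply d_pL, d_P1, der_refl. Qed.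

Lemma p_n_le (a : fm c T1) : Fp (Fn a) ⊢ a.
Proof. apply d_pL, d_PN2, d_nL, d_N1, der_refl. Qed.

Lemma le_p_n (a : fm c T1) : a ⊢ Fp (Fn a).
Proof. apply d_pR, d_NP1, d_nR, d_N1, der_refl. Qed.

Lemma p_zero_le (Y : st c T1) : dder (SF (Fp (FZero T2))) Y.
Proof. apply d_pL, d_PN2, zero_le. Qed.

Lemma le_p_one (X : st c T1) : dder X (SF (Fp (FOne T2))).
Proof. apply d_pR, d_NP1, le_one. Qed.

Lemma p_meet_le (a b : fm c T2) : Fp (FMeet a b) ⊢ FMeet (Fp a) (Fp b).
Proof. apply meet_glb; apply p_mono; [apply meet_lb_l | apply meet_lb_r]. Qed.

Lemma meet_p_le (a b : fm c T2) : FMeet (Fp a) (Fp b) ⊢ Fp (FMeet a b).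
Proof.
  apply d_pR, d_NP1, d_cL, d_meetR; apply d_NP2.
  - exact (d_cut (meet_lb_l _ _) (p_le_P _)).
  - exact (d_cut (meet_lb_r _ _) (p_le_P _)).
Qed.

Lemma p_join_le (a b : fm c T2) : Fp (FJoin a b) ⊢ FJoin (Fp a) (Fp b).
Proof.
  apply d_pL, d_PN2, d_cR, d_joinL; apply d_PN1.
  - exact (d_cut (P_le_p _) (join_ub_l _ _)).
  - exact (d_cut (P_le_p _) (join_ub_r _ _)).
Qed.

Lemma join_p_le (a b : fm c T2) : FJoin (Fp a) (Fp b) ⊢ Fp (FJoin a b).
Proof. apply join_lub; apply p_mono; [apply join_ub_l | apply join_ub_r]. Qed.

End Adjunction.

Section Negation.
Context {c : bool}.
Variable h : c = true.

Lemma neg_le_star {i} (a : fm c i) : dder (SF (FNeg h a)) (SStar h (SF a)).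
Proof. apply d_negL, d_st3, der_refl. Qed.

Lemma star_le_neg {i} (a : fm c i) : dder (SStar h (SF a)) (SF (FNeg h a)).
Proof. apply d_negR, d_st3, der_refl. Qed.

Lemma neg_anti {i} {a b : fm c i} : a ⊢ b -> FNeg h b ⊢ FNeg h a.
Proof. intro Hab. apply d_negL, d_negR, d_st3; assumption. Qed.

Lemma neg_neg_le {i} (a : fm c i) : FNeg h (FNeg h a) ⊢ a.
Proof. apply d_negL, d_st1, star_le_neg. Qed.

Lemma le_neg_neg {i} (a : fm c i) : a ⊢ FNeg h (FNeg h a).
Proof. apply d_negR, d_st2, neg_le_star. Qed.

Lemma neg_one_le {i} (Y : st c i) : dder (SF (FNeg h (FOne i))) Y.
Proof. apply d_negL, d_st1, le_one. Qed.

Lemma le_neg_zero {i} (X : st c i) : dder X (SF (FNeg h (FZero i))).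
Proof. apply d_negR, d_st2, zero_le. Qed.

Lemma join_neg_le {i} (a b : fm c i) :
  FJoin (FNeg h a) (FNeg h b) ⊢ FNeg h (FMeet a b).
Proof. apply join_lub; apply neg_anti; [apply meet_lb_l | apply meet_lb_r]. Qed.

Lemma neg_join_le {i} (a b : fm c i) :
  FNeg h (FJoin a b) ⊢ FMeet (FNeg h a) (FNeg h b).
Proof. apply meet_glb; apply neg_anti; [apply join_ub_l | apply join_ub_r]. Qed.

(* First [~ (~ a ⊔ ~ b) ⊢ a ⊓ b] by antitonicity and [~ ~ a ⊢ a]; applying [~]
   once more and cancelling [~ ~] gives the law (dually for the next one). *)
Lemma neg_meet_le {i} (a b : fm c i) :
  FNeg h (FMeet a b) ⊢ FJoin (FNeg h a) (FNeg h b).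
Proof.
  refine (d_cut (neg_anti _) (neg_neg_le _)).
  apply meet_glb.
  - exact (d_cut (neg_anti (join_ub_l _ _)) (neg_neg_le _)).
  - exact (d_cut (neg_anti (join_ub_r _ _)) (neg_neg_le _)).
Qed.

Lemma meet_neg_le {i} (a b : fm c i) :
  FMeet (FNeg h a) (FNeg h b) ⊢ FNeg h (FJoin a b).
Proof.
  refine (d_cut (le_neg_neg _) (neg_anti _)).
  apply join_lub.
  - exact (d_cut (le_neg_neg _) (neg_anti (meet_lb_l _ _))).
  - exact (d_cut (le_neg_neg _) (neg_anti (meet_lb_r _ _))).
Qed.

Lemma neg_n_le (a : fm c T1) : FNeg h (Fn a) ⊢ Fn (FNeg h a).
Proof.
  apply d_nR, d_negL, d_st1, d_stNL, d_nR, d_N1, d_st1, star_le_neg.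
Qed.

Lemma n_neg_le (a : fm c T1) : Fn (FNeg h a) ⊢ FNeg h (Fn a).
Proof.
  apply d_negR, d_nL, d_st2, d_stNR, d_nL, d_N1, d_st2, neg_le_star.
Qed.

End Negation.

Section Conflation.
Context {c : bool}.
Variable h : c = true.

Lemma p_neg_join_le (a b : fm c T2) :
  Fp (FNeg h (FJoin a b)) ⊢ FMeet (Fp (FNeg h a)) (Fp (FNeg h b)).
Proof. exact (d_cut (p_mono (neg_join_le h a b)) (p_meet_le _ _)). Qed.

Lemma meet_p_neg_le (a b : fm c T2) :
  FMeet (Fp (FNeg h a)) (Fp (FNeg h b)) ⊢ Fp (FNeg h (FJoin a b)).
Proof. exact (d_cut (meet_p_le _ _) (p_mono (meet_neg_le h a b))). Qed.

Lemma p_neg_meet_le (a b : fm c T2) :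
  Fp (FNeg h (FMeet a b)) ⊢ FJoin (Fp (FNeg h a)) (Fp (FNeg h b)).
Proof. exact (d_cut (p_mono (neg_meet_le h a b)) (p_join_le _ _)). Qed.

Lemma join_p_neg_le (a b : fm c T2) :
  FJoin (Fp (FNeg h a)) (Fp (FNeg h b)) ⊢ Fp (FNeg h (FMeet a b)).
Proof. exact (d_cut (join_p_le _ _) (p_mono (join_neg_le h a b))). Qed.

Lemma p_neg_one_le (Y : st c T1) : dder (SF (Fp (FNeg h (FOne T2)))) Y.
Proof. apply d_pL, d_PN2, neg_one_le. Qed.

Lemma le_p_neg_zero (X : st c T1) : dder X (SF (Fp (FNeg h (FZero T2)))).
Proof. apply d_pR, d_NP1, le_neg_zero. Qed.

Lemma p_neg_n_neg_le (a : fm c T1) : Fp (FNeg h (Fn (FNeg h a))) ⊢ a.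
Proof.
  exact (d_cut (p_mono (neg_n_le h _)) (d_cut (p_n_le _) (neg_neg_le h a))).
Qed.

Lemma le_p_neg_n_neg (a : fm c T1) : a ⊢ Fp (FNeg h (Fn (FNeg h a))).
Proof.
  exact (d_cut (le_neg_neg h a) (d_cut (le_p_n _) (p_mono (n_neg_le h _)))).
Qed.

End Conflation.

Create HintDb t1_laws.
#[export] Hint Resolve der_refl meet_glb meet_lb_l meet_lb_r join_lub join_ub_l
  join_ub_r le_one zero_le meet_join_distr p_mono p_n_le le_p_n p_zero_le le_p_one
  p_meet_le meet_p_le p_join_le join_p_le neg_n_le n_neg_le p_neg_join_le
  meet_p_neg_le p_neg_meet_le join_p_neg_le p_neg_one_le le_p_neg_zero
  p_neg_n_neg_le le_p_neg_n_neg : t1_laws.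

Lemma t1_sound {c : bool} (A B : bform c) : bder A B -> t1 A ⊢ t1 B.
Proof.
  induction 1; simpl; try solve [auto with t1_laws].
  - (* [A ⊗ (B ⊕ C) ⊢ (A ⊗ B) ∨ (A ⊕ C)] holds already through [A ⊕ C] *)
    exact (d_cut (meet_lb_l _ _) (d_cut (join_ub_l _ _) (join_ub_r _ _))).
  - exact (d_cut IHbder1 IHbder2).
Qed.

Theorem proposition2 :
  (forall A B : bform false, bder A B -> dder (SF (t1 A)) (SF (t1 B))) /\
  (forall A B : bform true, bder A B -> dder (SF (t1 A)) (SF (t1 B))).
Proof.
  split; intros A B; apply t1_sound.
Qed.
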